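(* Let $p$ be a prime. The group $X_{\{p\}}$ is a uniserial $\langle s\rangle$-module: for every integer $j\ge 0$ it has a unique $\langle s\rangle$-submodule of order $p^j$, namely $X_{p^j}=X\cap\ker\gamma^j$ (with $X_{1}=1$), and for $j\ge1$ this submodule is generated as an $\langle s\rangle$-module by $x_{p^j}$.
   Context: $s$ is the permutation matrix of the $p$-cycle $(1,2,\ldots,p)$ (permutations $\alpha$ correspond to matrices $[\delta_{i\alpha,j}]_{i,j}$), acting on the diagonal group $\mathrm{D}(p,\mathbb{C})$ by conjugation, $d^s=s^{-1}ds$; the action is extended to the integral group ring written exponentially and multiplicatively, e.g. $d^{1-s}=d\,(d^s)^{-1}$. $X=\mathrm{SL}(p,\mathbb{C})\cap\mathrm{D}(p,\mathbb{C})$, and $X_{\{p\}}$ is the subgroup of elements of $X$ of $p$-power order. $\gamma$ is the endomorphism $\gamma(d)=d^{1-s}$ of $\mathrm{D}(p,\mathbb{C})$. For $m\ge1$ let $b_m=\mathrm{diag}(e^{2\pi i/m},e^{-2\pi i/m},1,\ldots,1)$. For a positive integer $j$ write $j=n(p-1)-m$ with $n,m$ non-negative integers and $m<p-1$, and set $x_{p^j}=\gamma^m(b_{p^n})$. *)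

From HB Require Import structures.
From mathcomp Require Import all_boot all_order all_algebra all_fingroup.
From mathcomp Require Import complex.
From mathcomp Require Import Rstruct.
From Stdlib Require Rdefinitions Rtrigo_def Rtrigo1.
Set Implicit Arguments. Unset Strict Implicit. Unset Printing Implicit Defensive.
Import Order.TTheory GRing.Theory Num.Theory.
Local Open Scope ring_scope.

Notation CC := (complex Rdefinitions.R).

Definition expi (m : nat) : CC :=
  Complex (Rtrigo_def.cos (2 * Rtrigo1.PI / m%:R)) (Rtrigo_def.sin (2 * Rtrigo1.PI / m%:R)).

(* the p-cycle (1,2,...,p) on 'I_p : i |-> i+1 mod p *)
Definition pcycle (p : nat) : 'S_p := perm (@ordS_inj p).

(* s = permutation matrix [delta_{i alpha, j}]; mathcomp's perm_mx s i j = (s i == j) *)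
Definition smx (p : nat) : 'M[CC]_p := perm_mx (pcycle p).

Definition conjs (p : nat) (d : 'M[CC]_p) : 'M[CC]_p :=
  invmx (smx p) *m d *m smx p.

Definition inD (p : nat) (d : 'M[CC]_p) : Prop := is_diag_mx d /\ d \in unitmx.

Definition inX (p : nat) (d : 'M[CC]_p) : Prop := inD d /\ \det d = 1.

Definition inXp (p : nat) (d : 'M[CC]_p) : Prop :=
  inX d /\ exists k : nat, d ^+ (p ^ k)%N = 1%:M.

Definition gamma (p : nat) (d : 'M[CC]_p) : 'M[CC]_p := d *m invmx (conjs d).

Definition Xpj (p j : nat) (d : 'M[CC]_p) : Prop :=
  inX d /\ iter j (@gamma p) d = 1%:M.

Definition bmx (p m : nat) : 'M[CC]_p :=
  diag_mx (\row_(i < p) if nat_of_ord i == 0%N then expi m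
                        else if nat_of_ord i == 1%N then (expi m)^-1 else 1).

(* for j >= 1, j = n(p-1) - m with 0 <= m < p-1 *)
Definition nj (p j : nat) : nat := ((j + (p - 2)) %/ (p - 1))%N.
Definition mj (p j : nat) : nat := (nj p j * (p - 1) - j)%N.

Definition xpj (p j : nat) : 'M[CC]_p := iter (mj p j) (@gamma p) (bmx p (p ^ nj p j)).

Definition smodule (p : nat) (A : 'M[CC]_p -> Prop) : Prop :=
  (forall d, A d -> inXp d) /\
  A 1%:M /\
  (forall d e, A d -> A e -> A (d *m e)) /\
  (forall d, A d -> A (invmx d)) /\
  (forall d, A d -> A (conjs d)) /\
  (forall d, A d -> A (smx p *m d *m invmx (smx p))).

Definition has_order (T : eqType) (A : T -> Prop) (n : nat) : Prop :=
  exists l : seq T, [/\ uniq l, size l = n & forall x, A x <-> x \in l].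

Definition sgen (p : nat) (x : 'M[CC]_p) (d : 'M[CC]_p) : Prop :=
  forall A, smodule A -> A x -> A d.

Arguments Xpj p j d : clear implicits.
Arguments xpj p j : clear implicits.
Arguments bmx p m : clear implicits.
Arguments smx p : clear implicits.

(* A diagonal matrix is identified with its diagonal a : 'I_p -> CC; conjugation
   by s permutes the indices cyclically, so gamma becomes
   (gammaf a)_i = a_i / a_(i-1), and X_(p^k) becomes the functions of product 1
   killed by gammaf^k ("level k").  On level k+1, gammaf^k is a constant p-th
   root of unity, trivial exactly on level k; as gammaf maps level k+1
   onto level k (partial products give preimages), level k has p^k elements.
   If a has exact level k+1, any b of level k+1 is a power of a times an element
   of level k, so by induction a generates level k+1: every submodule is a level.
   On p-torsion functions gammaf^(p-1) is the norm, because
   'C(p-1, t) (p-1)^t = 1 mod p; this shows that b_p = gammaf (zeta_p,1,...,1)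
   has exact level p-1, hence that level p-1 is the p-torsion of X (a submodule
   containing b_p), and then that level k+p-1 consists of the a with a^p of
   level k.  By induction b_(p^n) has exact level n(p-1), and x_(p^j), which is
   gamma^m b_(p^n) with j = n(p-1) - m, has exact level j. *)

From Stdlib Require Import Reals Classical FunctionalExtensionality.
From mathcomp Require Import all_boot all_order all_algebra all_fingroup.
From mathcomp Require Import complex Rstruct ring lra zify.
Set Implicit Arguments. Unset Strict Implicit. Unset Printing Implicit Defensive.
Import Order.TTheory GRing.Theory Num.Theory.
Local Open Scope ring_scope.

Definition cis (t : R) : CC := Complex (cos t) (sin t).
Arguments cis t%_ring_scope.

Lemma cisD s t : cis s * cis t = cis (s + t).
Proof.
rewrite /cis cos_plus sin_plus /GRing.mul /= !RealsE.
by congr Complex; rewrite addrC.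
Qed.

Lemma cis0 : cis 0 = 1.
Proof. by rewrite /cis (_ : 0 = IZR 0) // cos_0 sin_0 !RealsE. Qed.

Lemma cisX t n : cis t ^+ n = cis (n%:R * t).
Proof.
elim: n => [|n IHn]; first by rewrite expr0 mul0r cis0.
by rewrite exprS IHn cisD mulrSr mulrDl mul1r addrC.
Qed.

Lemma cis_2PI : cis (2 * PI) = 1.
Proof.
have -> : 2 * PI = Rmult (IZR 2) PI by rewrite RmultE !RealsE.
by rewrite /cis cos_2PI sin_2PI !RealsE.
Qed.

Lemma expi_expr m : (0 < m)%N -> expi m ^+ m = 1.
Proof.
move=> m_gt0; rewrite cisX -cis_2PI; congr cis.
have m_neq0 : (m%:R : R) != 0 by rewrite pnatr_eq0 -lt0n.
by field.
Qed.

Lemma expi_expnS p n : (0 < p)%N -> expi (p ^ n.+1) ^+ p = expi (p ^ n).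
Proof.
move=> p_gt0; rewrite cisX; congr cis.
have p_neq0 : (p%:R : R) != 0 by rewrite pnatr_eq0 -lt0n.
by rewrite expnS natrM; field; rewrite natrX expf_neq0.
Qed.

Lemma expi_neq1 m : (1 < m)%N -> expi m != 1.
Proof.
move=> m_gt1; apply/eqP => /(congr1 (@complex.Re _)) /=.
have PI_gt0 : 0 < PI by have /RltP := PI_RGT_0; rewrite RealsE.
have m_ge2 : 2%:R <= m%:R :> R by rewrite ler_nat.
have m_gt0 : 0 < m%:R :> R by rewrite ltr0n ltnW.
set x := 2 * PI / m%:R.
have x_gt0 : 0 < x by rewrite divr_gt0 // mulr_gt0.
have x_lePI : x <= PI by rewrite /x ler_pdivrMr //; nra.
apply/eqP; rewrite -[X in _ != X]cos_0 lt_eqF //; apply/RltP.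
apply: cos_decreasing_1; apply/RleP || apply/RltP; rewrite ?RealsE ?lexx //; exact: ltW.
Qed.

Definition inv_fun (T : Type) (R : unitRingType) (f : T -> R) x := (f x)^-1.
Definition exp_fun (T : Type) (R : pzSemiRingType) (f : T -> R) n x := f x ^+ n.

Lemma invmx_right (R : comUnitRingType) n (A B : 'M[R]_n) : A *m B = 1%:M -> invmx A = B.
Proof.
move=> AB1; have [uA _] := mulmx1_unit AB1.
by rewrite -[RHS]mul1mx -(mulVmx uA) -mulmxA AB1 mulmx1.
Qed.

Lemma invmx_perm (R : comUnitRingType) n (s : 'S_n) :
  invmx (perm_mx s : 'M[R]_n) = perm_mx s^-1.
Proof. by apply: invmx_right; rewrite -perm_mxM mulgV perm_mx1. Qed.

Section DiagonalTransport.
Variable p : nat.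
Implicit Types (a b : 'I_p -> CC) (d : 'M[CC]_p).

Definition cycV : 'S_p := (pcycle p)^-1.
Definition gammaf a i := a i / a (cycV i).
Definition dmx a : 'M[CC]_p := diag_mx (\row_i a i).
Definition level k a := \prod_i a i = 1 /\ iter k gammaf a = (fun=> 1).

Lemma dmx_diag a : (fun i => dmx a i i) = a.
Proof. by apply: functional_extensionality => i; rewrite !mxE eqxx mulr1n. Qed.

Lemma dmx_inj : injective dmx.
Proof. by move=> a b eq_ab; rewrite -[a]dmx_diag -[b]dmx_diag eq_ab. Qed.

Lemma diag_dmx d : is_diag_mx d -> d = dmx (fun i => d i i).
Proof.
move=> /is_diag_mxP d_diag; apply/matrixP => i j; rewrite !mxE.
by have [<-|/d_diag ->] := eqVneq i j; rewrite ?mulr1n ?mulr0n.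
Qed.

Lemma mul_dmx a b : dmx a *m dmx b = dmx (a \* b).
Proof. by rewrite mulmx_diag; congr diag_mx; apply/rowP => i; rewrite !mxE. Qed.

Lemma dmx1 : dmx (fun=> 1) = 1%:M.
Proof. by apply/matrixP => i j; rewrite !mxE. Qed.

Lemma dmxX a n : dmx a ^+ n = dmx (exp_fun a n).
Proof.
elim: n => [|n IHn].
  by rewrite expr0 (_ : 1 = 1%:M) // -dmx1.
rewrite exprS IHn [_ * _]mul_dmx; congr dmx.
by apply: functional_extensionality => i; rewrite /exp_fun /= exprS.
Qed.

Lemma invmx_dmx a : (forall i, a i != 0) -> invmx (dmx a) = dmx (inv_fun a).
Proof.
move=> a_neq0; apply: invmx_right; rewrite mul_dmx -dmx1; congr dmx.
by apply: functional_extensionality => i; rewrite /= /inv_fun mulfV.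
Qed.

Lemma det_dmx a : \det (dmx a) = \prod_i a i.
Proof. by rewrite det_diag; apply: eq_bigr => i _; rewrite mxE. Qed.

Lemma conjs_dmx a : conjs (dmx a) = dmx (a \o cycV).
Proof.
rewrite /conjs /smx invmx_perm -row_permE -[pcycle p]invgK -col_permE.
by apply/matrixP => i j; rewrite !mxE !invgK (inj_eq perm_inj).
Qed.

Lemma sconj_dmx a : smx p *m dmx a *m invmx (smx p) = dmx (a \o pcycle p).
Proof.
rewrite /smx invmx_perm -row_permE -col_permE.
by apply/matrixP => i j; rewrite !mxE (inj_eq perm_inj).
Qed.

Lemma prod_eq1_neq0 a : \prod_i a i = 1 -> forall i, a i != 0.
Proof.
move=> a1 i; apply: contra_eq_neq a1 => ai0.
by rewrite (bigD1 i) //= ai0 mul0r eq_sym oner_neq0.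
Qed.

Lemma prod_comp_perm (s : 'S_p) a : \prod_i (a \o s) i = \prod_i a i.
Proof. by rewrite [RHS](reindex_inj (@perm_inj _ s)). Qed.

Lemma prod_gammaf a : \prod_i a i = 1 -> \prod_i gammaf a i = 1.
Proof. by move=> a1; rewrite prodf_div (prod_comp_perm cycV) a1 divr1. Qed.

Lemma prod_iter_gammaf k a : \prod_i a i = 1 -> \prod_i iter k gammaf a i = 1.
Proof. by elim: k => [|k IHk] //= /IHk; apply: prod_gammaf. Qed.

Lemma gamma_dmx a : (forall i, a i != 0) -> gamma (dmx a) = dmx (gammaf a).
Proof.
move=> a_neq0; rewrite /gamma conjs_dmx invmx_dmx; last by move=> i; apply: a_neq0.
by rewrite mul_dmx.
Qed.

Lemma iter_gamma_dmx k a :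
  \prod_i a i = 1 -> iter k (@gamma p) (dmx a) = dmx (iter k gammaf a).
Proof.
move=> a1; elim: k => [|k IHk] //=.
by rewrite IHk gamma_dmx //; apply/prod_eq1_neq0/prod_iter_gammaf.
Qed.

Lemma inX_dmx d : inX d <-> exists2 a, d = dmx a & \prod_i a i = 1.
Proof.
split=> [[[/diag_dmx d_diag _] det1]|[a -> a1]].
  by exists (fun i => d i i); rewrite // -det_dmx -d_diag.
split; last by rewrite det_dmx.
by split; [apply: diag_mx_is_diag | rewrite unitmxE det_dmx a1 unitr1].
Qed.

Lemma Xpj_dmx k d : Xpj p k d <-> exists2 a, d = dmx a & level k a.
Proof.
split=> [[/inX_dmx [a -> a1] dk]|[a -> [a1 ak]]].
  by exists a => //; split => //; apply: dmx_inj; rewrite dmx1 -dk iter_gamma_dmx.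
by split; [apply/inX_dmx; exists a | rewrite iter_gamma_dmx // ak dmx1].
Qed.

End DiagonalTransport.

Arguments cycV {p}.
Arguments gammaf {p} a i.

Lemma iter_morph1 (T : Type) (f h : T -> T) :
  {morph f : x / h x} -> forall k, {morph iter k f : x / h x}.
Proof. by move=> fh; elim=> [|k IHk] x //=; rewrite IHk fh. Qed.

Lemma iter_morph2 (T : Type) (f : T -> T) (op : T -> T -> T) :
  {morph f : x y / op x y} -> forall k, {morph iter k f : x y / op x y}.
Proof. by move=> fop; elim=> [|k IHk] x y //=; rewrite IHk fop. Qed.

Section Levels.
Variable p : nat.
Implicit Types (a b : 'I_p -> CC) (c : CC).

Lemma gammafM : {morph @gammaf p : a b / a \* b}.
Proof.
by move=> a b; apply: functional_extensionality => i; rewrite /gammaf /= invfM mulrACA.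
Qed.

Lemma gammafV : {morph @gammaf p : a / inv_fun a}.
Proof.
by move=> a; apply: functional_extensionality => i; rewrite /gammaf /inv_fun invfM invrK.
Qed.

Lemma gammafX n : {morph @gammaf p : a / exp_fun a n}.
Proof.
by move=> a; apply: functional_extensionality => i; rewrite /gammaf /exp_fun exprMn exprVn.
Qed.

Lemma gammaf_comp (s : 'S_p) :
  commute s (pcycle p) -> {morph @gammaf p : a / a \o s}.
Proof.
move=> /commuteV sC a; apply: functional_extensionality => i.
by rewrite /gammaf /= -!permM sC.
Qed.

Lemma gammaf_const c : c != 0 -> gammaf (fun _ : 'I_p => c) = (fun=> 1).
Proof. by move=> c_neq0; apply: functional_extensionality => i; rewrite /gammaf divff. Qed.

Lemma gammafZ c a : c != 0 -> gammaf (fun i => c * a i) = gammaf a.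
Proof.
move=> c_neq0; rewrite -[fun i => _]/((fun=> c) \* a) gammafM gammaf_const //.
by apply: functional_extensionality => i; rewrite /= mul1r.
Qed.

Lemma iter_gammaf1 k : iter k (@gammaf p) (fun=> 1) = (fun=> 1).
Proof. exact/iter_fix/gammaf_const/oner_neq0. Qed.

Lemma iter_pcycle t (i : 'I_p) : val (iter t (pcycle p) i) = ((i + t) %% p)%N.
Proof.
elim: t => [|t IHt] /=; first by rewrite addn0 modn_small.
by rewrite /pcycle permE /= IHt -addn1 modnDml addn1 addnS.
Qed.

Lemma pcycle_invariant_const a : a \o pcycle p = a -> forall i j, a i = a j.
Proof.
move=> aC; have a_iter t i : a (iter t (pcycle p) i) = a i.
  by elim: t => [|t IHt] //=; rewrite -IHt -{2}aC.
suff a_i0 i0 j : val i0 = 0%N -> a j = a i0.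
  move=> i j; pose i0 := Ordinal (leq_ltn_trans (leq0n i) (ltn_ord i)).
  by rewrite (a_i0 i0 i) ?(a_i0 i0 j).
move=> i00; rewrite -(a_iter j i0); congr a; apply: val_inj.
by rewrite iter_pcycle i00 add0n modn_small.
Qed.

Lemma gammaf_eq1 a : gammaf a = (fun=> 1) -> forall i j, a i = a j.
Proof.
move=> a1; apply: pcycle_invariant_const; apply: functional_extensionality => i /=.
by apply: divr1_eq; have := congr1 (fun f => f (pcycle p i)) a1; rewrite /gammaf /cycV permK.
Qed.

Hypothesis p_gt0 : (0 < p)%N.

Lemma expr_eq1_neq0 c : c ^+ p = 1 -> c != 0.
Proof.
by move=> cp1; apply: contra_eq_neq cp1 => ->; rewrite expr0n gtn_eqF // eq_sym oner_neq0.
Qed.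

Lemma level1P a : level 1 a <-> exists2 c, c ^+ p = 1 & a = fun=> c.
Proof.
pose i0 := Ordinal p_gt0; split=> [[a1 /= /gammaf_eq1 a_const]|[c cp1 ->]].
  have a_i0 : a = fun=> a i0 by apply: functional_extensionality => i; apply: a_const.
  by exists (a i0) => //; rewrite -a1 a_i0 prodr_const card_ord.
by split; rewrite ?prodr_const ?card_ord //= gammaf_const ?expr_eq1_neq0.
Qed.

Lemma level_gammaf k a : level k.+1 a -> level k (gammaf a).
Proof. by case=> a1 ak; split; [apply: prod_gammaf | rewrite -iterSr]. Qed.

Lemma level_of_gammaf k a : \prod_i a i = 1 -> level k (gammaf a) -> level k.+1 a.
Proof. by move=> a1 [_ ak]; split; rewrite // iterSr. Qed.

Lemma level_top_const k a : level k.+1 a ->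
  exists2 c, c ^+ p = 1 & iter k (@gammaf p) a = fun=> c.
Proof.
move=> [a1 ak]; apply/level1P.
by split; [apply: prod_iter_gammaf | rewrite /= -iterS].
Qed.

Lemma level_le k m a : (k <= m)%N -> level k a -> level m a.
Proof. by move=> /subnK <- [a1 ak]; split; rewrite // iterD ak iter_gammaf1. Qed.

Lemma level_mul k a b : level k a -> level k b -> level k (a \* b).
Proof.
move=> [a1 ak] [b1 bk]; split; first by rewrite big_split /= a1 b1 mulr1.
rewrite (iter_morph2 gammafM) ak bk.
by apply: functional_extensionality => i; rewrite /= mulr1.
Qed.

Lemma level_inv k a : level k a -> level k (inv_fun a).
Proof.
move=> [a1 ak]; split; first by rewrite prodfV a1 invr1.
rewrite (iter_morph1 gammafV) ak.
by apply: functional_extensionality => i; rewrite /inv_fun invr1.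
Qed.

Lemma level_comp k (s : 'S_p) a : commute s (pcycle p) -> level k a -> level k (a \o s).
Proof.
move=> sC [a1 ak]; split; first by rewrite prod_comp_perm.
by rewrite (iter_morph1 (gammaf_comp sC)) ak.
Qed.

Lemma level_torsion k a : level k a -> forall i, a i ^+ (p ^ k) = 1.
Proof.
elim: k a => [|k IHk] a [a1 ak] i; first by move: ak => /= ->; rewrite expr1.
have [c cp1 akc] := level_top_const (conj a1 ak).
have /IHk ap_lvl : level k (exp_fun a p).
  split; first by rewrite prodrXl a1 expr1n.
  by rewrite (iter_morph1 (gammafX p)) akc; apply: functional_extensionality.
by rewrite expnS exprM; apply: ap_lvl.
Qed.

End Levels.

Section Uniserial.
Variable p : nat.
Hypothesis p_prime : prime p.
Implicit Types (a b : 'I_p -> CC) (c : CC) (B : ('I_p -> CC) -> Prop).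

Definition fun_submodule B :=
  [/\ B (fun=> 1), forall a b, B a -> B b -> B (a \* b),
      forall a, B a -> B (inv_fun a) & forall a, B a -> B (a \o cycV)].

Lemma submodule_exp B a n : fun_submodule B -> B a -> B (exp_fun a n).
Proof.
case=> B1 BM _ _ Ba; elim: n => [|n IHn]; first exact: B1.
rewrite (_ : exp_fun a n.+1 = exp_fun a n \* a); first exact: BM.
by apply: functional_extensionality => i; rewrite /= /exp_fun exprSr.
Qed.

Lemma submodule_gammaf B a : fun_submodule B -> B a -> B (gammaf a).
Proof. by case=> _ BM BV BC Ba; apply: BM => //; apply/BV/BC. Qed.

Lemma prim_root_prime c : c ^+ p = 1 -> c != 1 -> p.-primitive_root c.
Proof.
move=> cp1 c_neq1; have [m m_prim m_dvd] := prim_order_exists (prime_gt0 p_prime) cp1.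
have [_ /(_ m m_dvd) /pred2P[m1|<- //]] := primeP p_prime.
by move: c_neq1; rewrite -[c]expr1 -m1 (prim_expr_order m_prim) eqxx.
Qed.

Lemma level_quotient k a b : level k.+1 a -> ~ level k a -> level k.+1 b ->
  exists r, level k (b \* inv_fun (exp_fun a r)).
Proof.
have p_gt0 := prime_gt0 p_prime.
move=> a_lvl a_nlvl b_lvl; have [[a1 _] [b1 _]] := (a_lvl, b_lvl).
have [z zp1 akz] := level_top_const p_gt0 a_lvl.
have [w wp1 bkw] := level_top_const p_gt0 b_lvl.
have z_neq1 : z != 1 by apply: contra_not_neq a_nlvl => z1; split; rewrite // akz z1.
have [r wz] := prim_rootP (prim_root_prime zp1 z_neq1) wp1.
exists r; split; first by rewrite big_split prodfV prodrXl /= a1 b1 expr1n invr1 mulr1.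
rewrite (iter_morph2 (@gammafM p)) (iter_morph1 (@gammafV p)) (iter_morph1 (@gammafX p r)) akz bkw.
apply: functional_extensionality => i; rewrite /= /inv_fun /exp_fun wz mulfV //.
exact/expf_neq0/(expr_eq1_neq0 p_gt0).
Qed.

Lemma submodule_cancel B a b r : fun_submodule B -> \prod_i a i = 1 -> B a ->
  B (b \* inv_fun (exp_fun a r)) -> B b.
Proof.
move=> B_sub a1 Ba; case: (B_sub) => _ BM _ _ /BM /(_ (submodule_exp r B_sub Ba)).
congr B; apply: functional_extensionality => i.
by rewrite /= /inv_fun /exp_fun mulfVK // expf_neq0 // prod_eq1_neq0.
Qed.

Lemma level_generated k a B : level k.+1 a -> ~ level k a ->
  fun_submodule B -> B a -> forall b, level k.+1 b -> B b.
Proof.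
move=> + + B_sub; elim: k a => [|k IHk] a a_lvl a_nlvl Ba b b_lvl;
  have [r [br1 brk]] := level_quotient a_lvl a_nlvl b_lvl;
  apply: (submodule_cancel (r := r) B_sub (proj1 a_lvl) Ba).
  by move: brk => /= ->; case: B_sub.
apply: (IHk (gammaf a)) => //.
- exact: level_gammaf.
- by move/(level_of_gammaf (proj1 a_lvl)).
- exact: submodule_gammaf.
Qed.

End Uniserial.

Lemma has_order_allpairs (T U V : eqType) (A : T -> Prop) (B : V -> Prop)
    (s : seq U) (f : T -> U -> V) n :
  has_order A n -> uniq s ->
  (forall x1 x2 c1 c2, A x1 -> A x2 -> c1 \in s -> c2 \in s ->
     f x1 c1 = f x2 c2 -> (x1, c1) = (x2, c2)) ->
  (forall v, B v <-> exists x c, [/\ A x, c \in s & v = f x c]) ->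
  has_order B (n * size s).
Proof.
case=> l [l_uniq <- Al] s_uniq f_inj Bf.
exists [seq f x c | x <- l, c <- s]; split; last first.
- move=> v; rewrite Bf; split=> [[x [c [/Al xl cs ->]]]|/allpairsP[[x c] /= [/Al xl cs ->]]].
    exact: allpairs_f.
  by exists x, c.
- by rewrite size_allpairs.
apply: allpairs_uniq => // -[x1 c1] [x2 c2] /allpairsP[[? ?] /= [/Al ? ? [-> ->]]].
by move=> /allpairsP[[? ?] /= [/Al ? ? [-> ->]]]; apply: f_inj.
Qed.

Lemma has_order_inj (T : eqType) (A B : T -> Prop) n m :
  (forall x, A x <-> B x) -> has_order A n -> has_order B m -> n = m.
Proof.
move=> AB [l1 [uniq1 <- A1]] [l2 [uniq2 <- B2]]; apply/perm_size/uniq_perm => // x.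
by apply/idP/idP => [/A1/AB/B2 | /B2/AB/A1].
Qed.

Section Counting.
Variable p : nat.
Hypothesis p_prime : prime p.
Let p_gt0 : (0 < p)%N := prime_gt0 p_prime.
Implicit Types (a y : 'I_p -> CC) (c : CC).

Lemma expi_prim : p.-primitive_root (expi p).
Proof.
by apply: prim_root_prime; rewrite ?expi_expr ?expi_neq1 ?prime_gt1.
Qed.

Definition roots_of_unity : seq CC := mkseq (fun r => expi p ^+ r) p.

Lemma uniq_roots_of_unity : uniq roots_of_unity.
Proof.
rewrite map_inj_in_uniq ?iota_uniq // => i j; rewrite !mem_iota /= => ip jp.
by move/eqP; rewrite (eq_prim_root_expr expi_prim) !modn_small // => /eqP.
Qed.

Lemma mem_roots_of_unity c : (c \in roots_of_unity) = (c ^+ p == 1).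
Proof.
apply/idP/eqP => [/mapP[r _ ->]|/(prim_rootP expi_prim)[r ->]].
  by rewrite -exprM mulnC exprM expi_expr ?expr1n.
by apply: map_f; rewrite mem_iota ltn_ord.
Qed.

Lemma size_roots_of_unity : size roots_of_unity = p.
Proof. exact: size_mkseq. Qed.

Lemma cycV_val (i : 'I_p) : (cycV i : nat) = if i == 0%N :> nat then p.-1 else i.-1.
Proof.
have /(congr1 val) := permKV (pcycle p) i; rewrite /pcycle permE /= -/cycV.
case: (ltngtP (cycV i).+1 p) => [lt_p|gt_p|eq_p].
- by rewrite modn_small // => <-.
- by rewrite ltnS leqNgt ltn_ord in gt_p.
- by rewrite eq_p modnn => <- /=; apply/succn_inj; rewrite eq_p prednK.
Qed.

Definition partial_prod y (i : 'I_p) := \prod_(k < p | (k <= i)%N) y k.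

Lemma gammaf_partial_prod y : \prod_i y i = 1 -> gammaf (partial_prod y) = y.
Proof.
move=> y1; apply: functional_extensionality => i; rewrite /gammaf /partial_prod (bigD1 i) //=.
case: (eqVneq (i : nat) 0%N) => [i0|i_neq0].
  rewrite big1 => [|k /andP[k_le /negP[]]]; last by apply/eqP/val_inj => /=; lia.
  rewrite mulr1 (eq_bigl xpredT) ?y1 ?divr1 // => k.
  by rewrite cycV_val i0 -ltnS prednK ?ltn_ord.
have -> : \prod_(k < p | (k <= i)%N && (k != i)) y k = partial_prod y (cycV i).
  apply: eq_bigl => k.
  by rewrite cycV_val (negPf i_neq0) -[RHS]ltnS prednK ?lt0n // ltn_neqAle andbC.
by rewrite mulfK //; apply/prodf_neq0 => k _; apply: prod_eq1_neq0.
Qed.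

(* Partial products invert gammaf on functions of product 1; the scalar
   factor renormalises the product to 1. *)
Definition antigamma y (i : 'I_p) := p.-root (\prod_(j < p) partial_prod y j)^-1 * partial_prod y i.

Lemma prod_partial_prod_neq0 y : \prod_i y i = 1 -> \prod_i partial_prod y i != 0.
Proof.
by move=> y1; do 2!apply/prodf_neq0 => ? _; apply: prod_eq1_neq0.
Qed.

Lemma prod_antigamma y : \prod_i y i = 1 -> \prod_i antigamma y i = 1.
Proof.
move=> y1; rewrite big_split /= prodr_const card_ord rootCK //.
by rewrite mulVf // prod_partial_prod_neq0.
Qed.

Lemma gammaf_antigamma y : \prod_i y i = 1 -> gammaf (antigamma y) = y.
Proof.
move=> y1; rewrite gammafZ ?gammaf_partial_prod //.
by rewrite rootC_eq0 // invr_eq0 prod_partial_prod_neq0.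
Qed.

Lemma gammaf_lift c y : c ^+ p = 1 -> \prod_i y i = 1 ->
  gammaf (fun i => c * antigamma y i) = y.
Proof.
by move=> cp1 y1; rewrite (@gammafZ p c (antigamma y)) ?gammaf_antigamma ?(expr_eq1_neq0 p_gt0).
Qed.

Lemma level_lift k c y : c ^+ p = 1 -> level k y -> level k.+1 (fun i => c * antigamma y i).
Proof.
move=> cp1 [y1 yk]; apply: level_of_gammaf; last by rewrite gammaf_lift.
by rewrite big_split /= prodr_const card_ord cp1 prod_antigamma ?mul1r.
Qed.

Lemma level_decomp k a : level k.+1 a ->
  exists2 c, c ^+ p = 1 & a = fun i => c * antigamma (gammaf a) i.
Proof.
move=> a_lvl; have [a1 _] := a_lvl; have [y1 _] := level_gammaf a_lvl.
have ag_neq0 := prod_eq1_neq0 (prod_antigamma y1).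
have /(level1P p_gt0)[c cp1 a_c] : level 1 (a \* inv_fun (antigamma (gammaf a))).
  split; first by rewrite big_split prodfV /= prod_antigamma // a1 invr1 mulr1.
  rewrite /= gammafM gammafV gammaf_antigamma //.
  by apply: functional_extensionality => i; rewrite /= /inv_fun mulfV // prod_eq1_neq0.
exists c => //; apply: functional_extensionality => i.
by rewrite -[c]/((fun=> c) i) -a_c /= /inv_fun mulfVK.
Qed.

Lemma lift_inj c1 c2 y1 y2 : c1 ^+ p = 1 -> c2 ^+ p = 1 ->
  \prod_i y1 i = 1 -> \prod_i y2 i = 1 ->
  (fun i => c1 * antigamma y1 i) = (fun i => c2 * antigamma y2 i) -> y1 = y2 /\ c1 = c2.
Proof.
move=> c1p1 c2p1 y1_1 y2_1 eq_lift.
have y12 : y1 = y2 by rewrite -(gammaf_lift c1p1 y1_1) eq_lift gammaf_lift.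
split=> //; rewrite -y12 in eq_lift; pose i0 := Ordinal p_gt0.
apply: (mulIf (prod_eq1_neq0 (prod_antigamma y1_1) i0)).
exact: (congr1 (fun f : 'I_p -> CC => f i0) eq_lift).
Qed.

Lemma card_Xpj k : has_order (Xpj p k) (p ^ k).
Proof.
elim: k => [|k IHk].
  exists [:: 1%:M]; split=> // d; rewrite inE; split=> [[_ /= ->] //|/eqP ->].
  by apply/Xpj_dmx; exists (fun=> 1); rewrite ?dmx1 //; split; rewrite ?big1_eq.
rewrite expnSr -[p in (_ * p)%N]size_roots_of_unity.
apply: (has_order_allpairs (A := Xpj p k) (s := roots_of_unity)
  (f := fun (y : 'M[CC]_p) c => dmx (fun i => c * antigamma (fun j => y j j) i)))
  => //; first exact: uniq_roots_of_unity.
  move=> _ _ c1 c2 /Xpj_dmx[y1 -> [y1_1 _]] /Xpj_dmx[y2 -> [y2_1 _]].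
  rewrite !mem_roots_of_unity !dmx_diag => /eqP c1p1 /eqP c2p1 /dmx_inj.
  by case/lift_inj => // -> ->.
move=> d; split=> [/Xpj_dmx[a -> a_lvl]|[_ [c [/Xpj_dmx[y -> y_lvl]]]]].
  have [c cp1 a_c] := level_decomp a_lvl.
  exists (dmx (gammaf a)), c; rewrite mem_roots_of_unity cp1 dmx_diag -a_c; split=> //.
  by apply/Xpj_dmx; exists (gammaf a); last exact: level_gammaf.
rewrite mem_roots_of_unity dmx_diag => /eqP cp1 ->.
by apply/Xpj_dmx; eexists; [reflexivity | apply: level_lift].
Qed.

End Counting.

Lemma binomial_pred_mod p t : prime p -> (t < p)%N ->
  ('C(p.-1, t) * p.-1 ^ t = 1 %[mod p])%N.
Proof.
move=> p_prime; have p_gt0 := prime_gt0 p_prime.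
elim: t => [|t IHt] t_lt; first by rewrite bin0 expn0.
have pascal : 'C(p, t.+1) = ('C(p.-1, t.+1) + 'C(p.-1, t))%N by rewrite -{1}(prednK p_gt0).
have : ('C(p.-1, t.+1) * p.-1 ^ t.+1 + 'C(p.-1, t) * p.-1 ^ t * p.-1 = 0 %[mod p])%N.
  rewrite -mulnA -expnSr -mulnDl -pascal mod0n; apply/eqP.
  exact: dvdn_mulr (@prime_dvd_bin t.+1 p p_prime t_lt).
rewrite -modnDmr -modnMml (IHt (ltnW t_lt)) modnMml modnDmr mul1n => sum0.
have : ('C(p.-1, t.+1) * p.-1 ^ t.+1 + p.-1 = 1 + p.-1 %[mod p])%N.
  by rewrite sum0 add1n prednK // modnn mod0n.
by move/eqP; rewrite eqn_modDr => /eqP.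
Qed.

Section Norm.
Variable p : nat.
Hypothesis p_prime : prime p.
Let p_gt0 : (0 < p)%N := prime_gt0 p_prime.
Implicit Types (a : 'I_p -> CC) (c : CC).

Lemma iter_pcycle_cycV t (i : 'I_p) : iter t (pcycle p) (iter t cycV i) = i.
Proof. by elim: t i => [|t IHt] i //; rewrite iterSr /= /cycV permKV IHt. Qed.

Lemma iter_cycV_inj (i : 'I_p) : injective (fun t : 'I_p => iter t cycV i).
Proof.
suff lt_neq (t u : 'I_p) : (t < u)%N -> iter t cycV i <> iter u cycV i.
  by move=> t u /= eq_tu; apply/val_inj/eqP; case: ltngtP => // /lt_neq; rewrite eq_tu.
move=> lt_tu /(congr1 (iter u (pcycle p))).
rewrite (iter_pcycle_cycV u i) -(subnK (ltnW lt_tu)) iterD iter_pcycle_cycV.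
move=> /(congr1 (@nat_of_ord p)); rewrite iter_pcycle => eq_mod.
have : (i + (u - t) == i + 0 %[mod p])%N by rewrite addn0 eq_mod modn_small.
rewrite eqn_modDl mod0n modn_small; last exact: leq_ltn_trans (leq_subr t u) (ltn_ord u).
by rewrite subn_eq0 leqNgt lt_tu.
Qed.

Lemma invr_unity_root c : c ^+ p = 1 -> c^-1 = c ^+ p.-1.
Proof.
move=> cp1; apply: (mulfI (expr_eq1_neq0 p_gt0 cp1)).
by rewrite mulfV ?(expr_eq1_neq0 p_gt0) // -exprS prednK.
Qed.

Lemma torsion_gammaf a : (forall i, a i ^+ p = 1) -> forall i, gammaf a i ^+ p = 1.
Proof. by move=> ap1 i; rewrite /gammaf exprMn exprVn !ap1 invr1 mulr1. Qed.

(* On p-torsion functions gammaf is a |-> a * (a \o cycV) ^+ p.-1, whose iterates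
   expand binomially. *)
Lemma iter_gammaf_torsion k a : (forall i, a i ^+ p = 1) ->
  forall i, iter k gammaf a i = \prod_(t < k.+1) a (iter t cycV i) ^+ ('C(k, t) * p.-1 ^ t).
Proof.
move=> ap1; elim: k => [|k IHk] i.
  by rewrite big_ord_recl big_ord0 mulr1 mul1n expr1.
have iter_p1 j : iter k gammaf a j ^+ p = 1.
  by elim: k {IHk} j => [|k IHk] j //=; apply: torsion_gammaf.
rewrite iterS {1}/gammaf invr_unity_root // !IHk big_ord_recl [RHS]big_ord_recl /=.
rewrite !bin0 !mul1n !expr1 -mulrA; congr (_ * _).
rewrite [RHS](eq_bigr (fun t : 'I_k.+1 =>
    a (iter t.+1 cycV i) ^+ ('C(k, t.+1) * p.-1 ^ t.+1) *
    a (iter t cycV (cycV i)) ^+ ('C(k, t) * p.-1 ^ t * p.-1))) => [|t _]; last first.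
  by rewrite -iterSr -exprD -mulnA -expnSr -mulnDl.
rewrite big_split /= [X in _ = X * _]big_ord_recr /= bin_small // mul0n expr0 mulr1.
by rewrite -prodrXl; congr (_ * _); apply: eq_bigr => t _; rewrite -exprM.
Qed.

Lemma iter_gammaf_norm a : (forall i, a i ^+ p = 1) ->
  iter p.-1 gammaf a = fun=> \prod_j a j.
Proof.
move=> ap1; apply: functional_extensionality => i.
rewrite iter_gammaf_torsion // prednK //.
rewrite [RHS](reindex_inj (@iter_cycV_inj i)); apply: eq_bigr => t _.
by rewrite -(expr_mod _ (ap1 _)) binomial_pred_mod // modn_small ?prime_gt1 ?expr1.
Qed.

End Norm.

Section Torsion.
Variable p : nat.
Hypothesis p_prime : prime p.
Let p_gt0 : (0 < p)%N := prime_gt0 p_prime.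
Let p_gt1 : (1 < p)%N := prime_gt1 p_prime.
Implicit Types (a : 'I_p -> CC) (m : nat).

Definition b_fun m (i : 'I_p) : CC :=
  if i == 0%N :> nat then expi m else if i == 1%N :> nat then (expi m)^-1 else 1.

Lemma bmx_dmx m : bmx p m = dmx (b_fun m).
Proof. by []. Qed.

Definition zeta_fun (i : 'I_p) : CC := if i == 0%N :> nat then expi p else 1.

Lemma prod_b_fun m : (0 < m)%N -> \prod_i b_fun m i = 1.
Proof.
move=> m_gt0; pose i0 : 'I_p := Ordinal p_gt0; pose i1 : 'I_p := Ordinal p_gt1.
rewrite (bigD1 i0) // (bigD1 i1) //= big1 => [|[[|[|i]] lt_ip] //].
by rewrite /b_fun /= mulr1 mulfV // (expr_eq1_neq0 m_gt0 (expi_expr m_gt0)).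
Qed.

Lemma b_fun_expn n i : b_fun (p ^ n.+1) i ^+ p = b_fun (p ^ n) i.
Proof.
by rewrite /b_fun; case: ifP => _; [|case: ifP => _]; rewrite ?exprVn ?expi_expnS ?expr1n.
Qed.

Lemma b_fun_torsion i : b_fun p i ^+ p = 1.
Proof.
by rewrite /b_fun; case: ifP => _; [|case: ifP => _]; rewrite ?exprVn ?expi_expr ?invr1 ?expr1n.
Qed.

Lemma gammaf_zeta_fun : gammaf zeta_fun = b_fun p.
Proof.
apply: functional_extensionality => i; rewrite /gammaf /zeta_fun /b_fun cycV_val //.
case: i => -[|[|i]] lt_ip /=; rewrite ?invr1 ?mulr1 ?div1r //.
by rewrite -subn1 subn_eq0 leqNgt p_gt1 invr1 mulr1.
Qed.

Lemma level_b_fun : level p.-1 (b_fun p).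
Proof.
split; first exact: prod_b_fun.
by rewrite iter_gammaf_norm // ?prod_b_fun //; apply: b_fun_torsion.
Qed.

Lemma not_level_b_fun : ~ level p.-2 (b_fun p).
Proof.
have pm1_gt0 : (0 < p.-1)%N by rewrite -subn1 subn_gt0.
move=> [_]; rewrite -gammaf_zeta_fun -iterSr prednK //.
have zeta_p1 i : zeta_fun i ^+ p = 1 by rewrite /zeta_fun; case: ifP; rewrite ?expi_expr ?expr1n.
rewrite iter_gammaf_norm // => /(congr1 (fun f => f (Ordinal p_gt0))).
rewrite (bigD1 (Ordinal p_gt0)) //= big1 => [|[[|i] lt_ip] //].
by rewrite /zeta_fun /= mulr1; apply/eqP/expi_neq1.
Qed.

Lemma level_pred_of_torsion a : \prod_i a i = 1 -> (forall i, a i ^+ p = 1) -> level p.-1 a.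
Proof. by move=> a1 ap1; split; rewrite // iter_gammaf_norm // a1. Qed.

Lemma torsion_submodule :
  fun_submodule (fun a => \prod_i a i = 1 /\ forall i, a i ^+ p = 1).
Proof.
split=> [|a b [a1 ap1] [b1 bp1]|a [a1 ap1]|a [a1 ap1]]; split.
- exact: big1_eq.
- by move=> i; rewrite expr1n.
- by rewrite big_split /= a1 b1 mulr1.
- by move=> i; rewrite /= exprMn ap1 bp1 mulr1.
- by rewrite prodfV a1 invr1.
- by move=> i; rewrite /inv_fun exprVn ap1 invr1.
- by rewrite prod_comp_perm.
- by move=> i; apply: ap1.
Qed.

Lemma torsion_of_level_pred a : level p.-1 a -> forall i, a i ^+ p = 1.
Proof.
have pm1E : p.-1 = (p.-2).+1 by rewrite prednK // -subn1 subn_gt0.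
rewrite pm1E => a_lvl.
have [] // := level_generated p_prime _ not_level_b_fun torsion_submodule _ a_lvl.
  by rewrite -pm1E; apply: level_b_fun.
by split; [apply: prod_b_fun | apply: b_fun_torsion].
Qed.

Lemma level_addn_pred k a : \prod_i a i = 1 ->
  level (k + p.-1) a <-> level k (exp_fun a p).
Proof.
move=> a1; have ak1 := prod_iter_gammaf k a1.
have ap1 : \prod_i exp_fun a p i = 1 by rewrite prodrXl a1 expr1n.
rewrite /level addnC iterD (iter_morph1 (@gammafX p p)).
split=> [[_ /(conj ak1) /torsion_of_level_pred akp1]|[_ akp1]].
  by split=> //; apply: functional_extensionality => i; rewrite /exp_fun akp1.
split=> //; apply: (proj2 (level_pred_of_torsion ak1 _)) => i.
by have := congr1 (fun f => f i) akp1.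
Qed.

Lemma level_of_torsion m a : \prod_i a i = 1 -> (forall i, a i ^+ (p ^ m) = 1) ->
  level (m * p.-1) a.
Proof.
elim: m a => [|m IHm] a a1 apm1.
  by split=> //=; apply: functional_extensionality => i; rewrite -[a i]expr1.
rewrite mulSnr; apply/level_addn_pred => //; apply: IHm => [|i].
  by rewrite prodrXl a1 expr1n.
by rewrite /exp_fun -exprM -expnS.
Qed.

Lemma b_fun_exact n : level (n.+1 * p.-1) (b_fun (p ^ n.+1)) /\
  ~ level (n.+1 * p.-1).-1 (b_fun (p ^ n.+1)).
Proof.
have b1 n' : \prod_i b_fun (p ^ n'.+1) i = 1 by rewrite prod_b_fun // expn_gt0 p_gt0.
have bpE n' : exp_fun (b_fun (p ^ n'.+2)) p = b_fun (p ^ n'.+1).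
  by apply: functional_extensionality => i; rewrite /exp_fun b_fun_expn.
elim: n => [|n [IH_lvl IH_nlvl]].
  by rewrite mul1n expn1; split; [apply: level_b_fun | apply: not_level_b_fun].
have lvl_pos : (0 < n.+1 * p.-1)%N by rewrite muln_gt0 -subn1 subn_gt0 p_gt1.
have -> : (n.+2 * p.-1).-1 = ((n.+1 * p.-1).-1 + p.-1)%N.
  by rewrite mulSnr -[in LHS](prednK lvl_pos) addSn.
by rewrite mulSnr !(level_addn_pred _ (b1 _)) bpE.
Qed.

End Torsion.

Lemma bound_seq (T : eqType) (P : nat -> T -> Prop) (s : seq T) :
  (forall k m x, (k <= m)%N -> P k x -> P m x) ->
  (forall x, x \in s -> exists k, P k x) -> exists K, forall x, x \in s -> P K x.
Proof.
move=> P_mono; elim: s => [|x s IHs] s_P; first by exists 0%N.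
have [k Pkx] := s_P x (mem_head x s).
have [K PK] : exists K, forall y, y \in s -> P K y.
  by apply: IHs => y ys; apply: s_P; rewrite inE ys orbT.
exists (maxn k K) => y; rewrite inE => /predU1P[->|/PK]; apply: P_mono.
- exact: leq_maxl.
- exact: Pkx.
- exact: leq_maxr.
Qed.

Section Submodules.
Variable p : nat.
Hypothesis p_prime : prime p.
Let p_gt0 : (0 < p)%N := prime_gt0 p_prime.
Implicit Types (A : 'M[CC]_p -> Prop) (d : 'M[CC]_p).

Lemma Xpj_le k m d : (k <= m)%N -> Xpj p k d -> Xpj p m d.
Proof.
by move=> le_km /Xpj_dmx[a -> a_lvl]; apply/Xpj_dmx; exists a; last exact: level_le a_lvl.
Qed.

Lemma Xpj_smodule k : smodule (Xpj p k).
Proof.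
refine (conj _ (conj _ (conj _ (conj _ (conj _ _))))).
- move=> _ /Xpj_dmx[a -> a_lvl]; split; first by apply/inX_dmx; exists a; case: a_lvl.
  exists k; rewrite dmxX -dmx1; congr dmx; apply: functional_extensionality => i.
  exact: (level_torsion p_gt0 a_lvl i).
- by apply/Xpj_dmx; exists (fun=> 1); rewrite ?dmx1 //; split; rewrite ?big1_eq ?iter_gammaf1.
- move=> _ _ /Xpj_dmx[a -> a_lvl] /Xpj_dmx[b -> b_lvl].
  by apply/Xpj_dmx; exists (a \* b); [apply: mul_dmx | apply: level_mul].
- move=> _ /Xpj_dmx[a -> a_lvl]; apply/Xpj_dmx; exists (inv_fun a); last exact: level_inv.
  by rewrite invmx_dmx //; apply: prod_eq1_neq0; case: a_lvl.
- move=> _ /Xpj_dmx[a -> a_lvl]; apply/Xpj_dmx; exists (a \o cycV); first exact: conjs_dmx.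
  exact: level_comp (commute_sym (commuteV (commute_refl _))) a_lvl.
- move=> _ /Xpj_dmx[a -> a_lvl]; apply/Xpj_dmx; exists (a \o pcycle p); first exact: sconj_dmx.
  exact: level_comp.
Qed.

Lemma fun_submodule_smodule A : smodule A -> fun_submodule (fun a => A (dmx a)).
Proof.
case=> A_Xp [A1 [AM [AV [AC _]]]]; split=> [|a b|a|a].
- by rewrite dmx1.
- by rewrite -mul_dmx; apply: AM.
- move=> Aa; have [/inX_dmx[a' /dmx_inj <- a1] _] := A_Xp _ Aa.
  by rewrite -invmx_dmx; [apply: AV | apply: prod_eq1_neq0].
- by rewrite -conjs_dmx; apply: AC.
Qed.

Lemma inXp_Xpj d : inXp d -> exists k, Xpj p k d.
Proof.
case=> /inX_dmx[a -> a1] [k dk1]; exists (k * p.-1)%N; apply/Xpj_dmx; exists a => //.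
apply: level_of_torsion => // i; move: dk1; rewrite dmxX -dmx1 => /dmx_inj.
by move/(congr1 (fun f => f i)).
Qed.

Lemma smodule_sub_Xpj A n : smodule A -> has_order A n ->
  exists K, forall d, A d -> Xpj p K d.
Proof.
move=> [A_Xp _] [l [_ _ Al]].
have [K lK] := bound_seq (@Xpj_le) (fun d dl => inXp_Xpj (A_Xp d ((Al d).2 dl))).
by exists K => d /Al /lK.
Qed.

Lemma smodule_eq_Xpj A K : smodule A -> (forall d, A d -> Xpj p K d) ->
  exists k, forall d, A d <-> Xpj p k d.
Proof.
move=> A_mod; have A_sub := fun_submodule_smodule A_mod.
elim: K => [|K IHK] AK.
  exists 0%N => d; split=> [/AK //|/Xpj_dmx[a -> [_ /= ->]]].
  by rewrite dmx1; case: A_mod => _ [].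
have [[d [Ad d_nK]]|all_K] := classic (exists d, A d /\ ~ Xpj p K d); last first.
  by apply: IHK => d Ad; apply: NNPP => d_nK; apply: all_K; exists d.
exists K.+1 => e; split=> [/AK //|/Xpj_dmx[b -> b_lvl]].
have /Xpj_dmx[a d_a a_lvl] := AK d Ad.
apply: (level_generated p_prime a_lvl _ A_sub) => //; last by rewrite -d_a.
by move=> a_K; apply: d_nK; rewrite d_a; apply/Xpj_dmx; exists a.
Qed.

Lemma smodule_order_Xpj j A : smodule A -> has_order A (p ^ j) ->
  forall d, A d <-> Xpj p j d.
Proof.
move=> A_mod A_ord; have [K AK] := smodule_sub_Xpj A_mod A_ord.
have [k A_k] := smodule_eq_Xpj A_mod AK.
suff -> : j = k by [].
by apply/(expnI (prime_gt1 p_prime))/(has_order_inj A_k A_ord)/card_Xpj.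
Qed.

Lemma nj_spec j : (0 < j)%N -> (0 < nj p j)%N /\ (j <= nj p j * p.-1)%N.
Proof.
move=> j_gt0; have p_gt1 := prime_gt1 p_prime; rewrite /nj -subn1.
have pm1_gt0 : (0 < p - 1)%N by rewrite subn_gt0.
have := divn_eq (j + (p - 2)) (p - 1); have := ltn_pmod (j + (p - 2)) pm1_gt0.
set q := ((j + (p - 2)) %/ (p - 1))%N; set r := ((j + (p - 2)) %% (p - 1))%N.
nia.
Qed.

Lemma xpj_exact j : (0 < j)%N ->
  exists2 x, xpj p j = dmx x & level j x /\ ~ level j.-1 x.
Proof.
move=> j_gt0; have [nj_gt0 le_j] := nj_spec j_gt0.
have [b_lvl b_nlvl] := b_fun_exact p_prime (nj p j).-1.
rewrite prednK // in b_lvl b_nlvl; have [b1 bn1] := b_lvl.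
have mjE : (mj p j + j)%N = (nj p j * p.-1)%N by rewrite /mj subn1 subnK.
exists (iter (mj p j) gammaf (b_fun (p ^ nj p j))).
  by rewrite /xpj bmx_dmx iter_gamma_dmx.
split; first by split; [apply: prod_iter_gammaf | rewrite -iterD addnC mjE].
move=> [_]; rewrite -iterD => bn1'; apply: b_nlvl; split=> //.
rewrite -mjE; set m := mj p j; have -> : (m + j).-1 = (j.-1 + m)%N by lia.
exact: bn1'.
Qed.

Lemma sgen_xpj j : (0 < j)%N -> forall d, sgen (xpj p j) d <-> Xpj p j d.
Proof.
move=> j_gt0 d; have [x x_def [x_lvl x_nlvl]] := xpj_exact j_gt0.
split=> [|/Xpj_dmx[b -> b_lvl] A A_mod Ax].
  by apply; [apply: Xpj_smodule | apply/Xpj_dmx; exists x].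
rewrite x_def in Ax; rewrite -(prednK j_gt0) in x_lvl b_lvl.
exact: (level_generated p_prime x_lvl x_nlvl (fun_submodule_smodule A_mod) Ax b_lvl).
Qed.

End Submodules.

Theorem lemma3p7 (p : nat) (hp : prime p) :
  forall j : nat,
    [/\ smodule (Xpj p j),
        has_order (Xpj p j) (p ^ j),
        (forall A : 'M[CC]_p -> Prop, smodule A -> has_order A (p ^ j) ->
           forall d, A d <-> Xpj p j d)
      & (0 < j)%N -> forall d, sgen (xpj p j) d <-> Xpj p j d].
Proof.
move=> j; split.
- exact: Xpj_smodule.
- exact: card_Xpj.
- by move=> A; apply: smodule_order_Xpj.
- exact: sgen_xpj.
Qed.
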